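(* Consider a one-step MDP ($T=1$) with a single state $\mathcal{S}=\{s_0\}$, action space equal to the goal space $\mathcal{A}=\mathcal{G}$ with $|\mathcal{A}|=|\mathcal{G}|=k$, and reward $r(s,a,g)=\mathbb{I}[a=g]$. Let the policy be $\pi(a\mid s_0,g)=\exp(L_{a,g})/\sum_{b\in\mathcal{A}}\exp(L_{b,g})$ with logits $L_{a,g}$, let the goal distribution be uniform, $p(g)=1/k$ for all $g\in\mathcal{G}$, and suppose the policy is at its initialization $L_{a,g}\equiv L$ for all $a,g$ (some constant $L$). For $a\in\mathcal{A},g\in\mathcal{G}$, let $\eta_{a,g}=r(s_0,b,g')\,\frac{\partial}{\partial L_{a,g}}\log\pi(b\mid s_0,g')$, where $g'\sim p(\cdot)$ and $b\sim\pi(\cdot\mid s_0,g')$, be the one-sample REINFORCE estimator of $\frac{\partial}{\partial L_{a,g}}J$, with $J=\mathbb{E}_{g\sim p}\mathbb{E}_{a\sim\pi(\cdot\mid s_0,g)}[r(s_0,a,g)]$. For a random variable $x$ define $\mathrm{MSE}[x]:=\mathbb{E}[(x-\mathbb{E}[\eta_{a,g}])^2]$. Then for every $a\in\mathcal{A}$ and $g\in\mathcal{G}$, as $k\to\infty$, $$\frac{\sqrt{\mathrm{MSE}[\eta_{a,g}]}}{\big|\mathbb{E}[\eta_{a,g}]\big|}=k\,(1+o(1)).$$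
   Context: $o(1)$ denotes a quantity tending to $0$ as $k\to\infty$. *)

From HB Require Import structures.
From mathcomp Require Import all_boot all_order all_algebra.
From mathcomp Require Import all_classical all_reals all_analysis.
Set Implicit Arguments. Unset Strict Implicit. Unset Printing Implicit Defensive.
Import Order.TTheory GRing.Theory Num.Theory.
Local Open Scope ring_scope.

(* One-step MDP with a single state s0 (left implicit), actions = goals = 'I_k.
   Logits L : 'I_k -> 'I_k -> R, indexed as L a g (action a, goal g). *)

Definition pol (R : realType) (k : nat) (L : 'I_k -> 'I_k -> R) (b g : 'I_k) : R :=
  expR (L b g) / \sum_(c < k) expR (L c g).

Definition rew (R : realType) (k : nat) (b g : 'I_k) : R := (b == g)%:R.

Definition goal_p (R : realType) (k : nat) (g : 'I_k) : R := (k%:R)^-1.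

Definition upd (R : realType) (k : nat) (L : 'I_k -> 'I_k -> R) (a g : 'I_k) (t : R) :
  'I_k -> 'I_k -> R :=
  fun b g' => if (b == a) && (g' == g) then t else L b g'.

Definition dlogpi (R : realType) (k : nat) (L : 'I_k -> 'I_k -> R) (a g b g' : 'I_k) : R :=
  derive1 (fun t : R => ln (pol (upd L a g t) b g')) (L a g).

(* one-sample REINFORCE estimator eta_{a,g}, as a function of the sample (g', b) *)
Definition reinforce (R : realType) (k : nat) (L : 'I_k -> 'I_k -> R) (a g : 'I_k)
  (g' b : 'I_k) : R :=
  rew R b g' * dlogpi L a g b g'.

Definition Ex (R : realType) (k : nat) (L : 'I_k -> 'I_k -> R) (X : 'I_k -> 'I_k -> R) : R :=
  \sum_(g' < k) \sum_(b < k) goal_p R g' * pol L b g' * X g' b.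

Definition MSE (R : realType) (k : nat) (L : 'I_k -> 'I_k -> R) (a g : 'I_k)
  (X : 'I_k -> 'I_k -> R) : R :=
  Ex L (fun g' b => (X g' b - Ex L (reinforce L a g)) ^+ 2).

Definition const_logits (R : realType) (k : nat) (L0 : R) : 'I_k -> 'I_k -> R :=
  fun _ _ => L0.

Definition snr_ratio (R : realType) (k : nat) (L0 : R) (a g : 'I_k) : R :=
  Num.sqrt (MSE (const_logits (k:=k) L0) a g (reinforce (const_logits (k:=k) L0) a g))
  / `| Ex (const_logits (k:=k) L0) (reinforce (const_logits (k:=k) L0) a g) |.

From HB Require Import structures.
From mathcomp Require Import all_boot all_order all_algebra.
From mathcomp Require Import all_classical all_reals all_analysis.
From mathcomp.algebra_tactics Require Import ring lra.
Import Order.TTheory GRing.Theory Num.Theory.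
Import numFieldNormedType.Exports.
Local Open Scope classical_set_scope.
Local Open Scope ring_scope.

(* At any logits L the softmax score is d/dL_{a,g} log pi(b | g') = [g' = g]([b = a] - pi(a | g)),
   and the reward forces b = g', so the REINFORCE sample vanishes except at (g', b) = (g, g).
   Hence E[eta] = p(g) pi(g | g) c and E[eta^2] = p(g) pi(g | g) c^2 with c = [g = a] - pi(a | g),
   and MSE[eta] = Var[eta] = E[eta]^2 (k / pi(g | g) - 1).  At the uniform initialization
   pi = 1/k and c <> 0 for k > 1, so the ratio is exactly sqrt(k^2 - 1) = k (1 + o(1)). *)

Lemma weighted_variance (R : comPzRingType) (I : finType) (w X : I -> R) :
  \sum_i w i = 1 ->
  \sum_i w i * (X i - \sum_j w j * X j) ^+ 2 =
  \sum_i w i * X i ^+ 2 - (\sum_i w i * X i) ^+ 2.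
Proof.
move=> w1; set m := \sum_j w j * X j.
have -> : \sum_i w i * (X i - m) ^+ 2 =
    \sum_i w i * X i ^+ 2 - m *+ 2 * m + m ^+ 2 * \sum_i w i.
  rewrite [m *+ 2 * _]mulr_sumr mulr_sumr -sumrB -big_split /=.
  by apply: eq_bigr => i _; ring.
by rewrite w1; ring.
Qed.

Section SoftmaxGradient.
Variables (R : realType) (k : nat).
Implicit Types (L : 'I_k -> 'I_k -> R) (a b c g : 'I_k).

Lemma is_derive_ln_expRD (x C : R) : 0 <= C ->
  is_derive x 1 (fun t => ln (expR t + C)) (expR x / (expR x + C)).
Proof.
move=> C0; rewrite mulrC.
have dS : is_derive x (1 : R) (fun t => expR t + C) (expR x).
  by apply: is_derive_eq (is_deriveD _ (is_derive_cst C _ _)) _; rewrite addr0.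
have S_gt0 : 0 < expR x + C by rewrite ltr_pwDl ?expR_gt0.
exact: (@is_derive1_comp R (@ln R) (fun t => expR t + C) x _ _ (is_derive1_ln S_gt0) dS).
Qed.

Lemma sum_expR_upd L a g (t : R) :
  \sum_c expR (upd L a g t c g) = expR t + \sum_(c | c != a) expR (L c g).
Proof.
rewrite (bigD1 a) //= /upd !eqxx; congr (_ + _).
by apply: eq_bigr => c /negbTE ->.
Qed.

Lemma ln_pol_upd L a g b (t : R) :
  ln (pol (upd L a g t) b g) =
  (if b == a then t else L b g) - ln (expR t + \sum_(c | c != a) expR (L c g)).
Proof.
have C0 : 0 <= \sum_(c | c != a) expR (L c g) by apply: sumr_ge0 => c _; exact: expR_ge0.
rewrite /pol sum_expR_upd ln_div ?posrE ?expR_gt0 ?ltr_pwDl ?expR_gt0 // expRK.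
by rewrite /upd eqxx andbT.
Qed.

Lemma dlogpi_softmax L a g b (g' : 'I_k) :
  dlogpi L a g b g' = (g' == g)%:R * ((b == a)%:R - pol L a g).
Proof.
rewrite /dlogpi; have [->|ng] := eqVneq g' g; last first.
  have -> : (fun t => ln (pol (upd L a g t) b g')) = cst (ln (pol L b g')).
    by apply: funext => t; rewrite /pol /upd (negbTE ng) andbF; under eq_bigr do rewrite andbF.
  by rewrite derive1_cst mul0r.
set C := \sum_(c | c != a) expR (L c g).
have C0 : 0 <= C by apply: sumr_ge0 => c _; exact: expR_ge0.
have d_if : is_derive (L a g) (1 : R) (fun t => if b == a then t else L b g) (b == a)%:R.
  by case: (b == a); [exact: is_derive_id | exact: is_derive_cst].
have -> : (fun t => ln (pol (upd L a g t) b g)) =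
    (fun t => if b == a then t else L b g) - (fun t => ln (expR t + C)).
  by apply: funext => t; rewrite ln_pol_upd.
rewrite derive1E; have [_ ->] := is_deriveB d_if (is_derive_ln_expRD (L a g) C C0).
rewrite mul1r /pol -(sum_expR_upd L a g); congr (_ - _ / _); apply: eq_bigr => c _.
by rewrite /upd; case: (eqVneq c a) => [->|_]; rewrite ?eqxx.
Qed.

Lemma sum_expR_gt0 L g : 0 < \sum_c expR (L c g).
Proof.
rewrite (bigD1 g) //= ltr_pwDl ?expR_gt0 //.
by apply: sumr_ge0 => c _; exact: expR_ge0.
Qed.

Lemma pol_gt0 L b g : 0 < pol L b g.
Proof. by rewrite divr_gt0 ?expR_gt0 ?sum_expR_gt0. Qed.

Lemma sum_pol L g : \sum_b pol L b g = 1.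
Proof. by rewrite -mulr_suml mulfV // gt_eqF ?sum_expR_gt0. Qed.

Lemma Ex_pair L X :
  Ex L X = \sum_(p : 'I_k * 'I_k) goal_p R p.1 * pol L p.2 p.1 * X p.1 p.2.
Proof. exact: pair_bigA. Qed.

Lemma sum_Ex_weights L : (0 < k)%N ->
  \sum_(p : 'I_k * 'I_k) goal_p R p.1 * pol L p.2 p.1 = 1.
Proof.
move=> k_gt0.
rewrite -(pair_bigA _ (fun g b => goal_p R g * pol L b g)) /=.
under eq_bigr do rewrite -mulr_sumr sum_pol mulr1.
by rewrite sumr_const card_ord /goal_p -[k%:R^-1 *+ k]mulr_natr mulVf // pnatr_eq0 -lt0n.
Qed.

Lemma Ex_sub_mean_sqr L X : (0 < k)%N ->
  Ex L (fun g b => (X g b - Ex L X) ^+ 2) = Ex L (fun g b => X g b ^+ 2) - Ex L X ^+ 2.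
Proof. by move=> k_gt0; rewrite !Ex_pair weighted_variance ?sum_Ex_weights. Qed.

Lemma Ex_supported_at L g X :
  (forall g' b, (g', b) != (g, g) -> X g' b = 0) ->
  Ex L X = goal_p R g * pol L g g * X g g.
Proof.
move=> X0; rewrite Ex_pair (bigD1 (g, g)) //= big1 ?addr0 // => -[g' b] /= ne.
by rewrite X0 ?mulr0.
Qed.

Lemma reinforce_softmax L a g (g' : 'I_k) b :
  reinforce L a g g' b = (b == g')%:R * (g' == g)%:R * ((b == a)%:R - pol L a g).
Proof. by rewrite /reinforce /rew dlogpi_softmax mulrA. Qed.

Lemma reinforce_supported L a g (g' : 'I_k) b :
  (g', b) != (g, g) -> reinforce L a g g' b = 0.
Proof.
rewrite reinforce_softmax xpair_eqE => ne.
have [eg|_] := eqVneq g' g; last by rewrite mulr0 mul0r.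
by rewrite eg eqxx /= in ne; rewrite eg (negbTE ne) !mul0r.
Qed.

Lemma Ex_reinforce L a g :
  Ex L (reinforce L a g) = goal_p R g * pol L g g * ((g == a)%:R - pol L a g).
Proof.
by rewrite (Ex_supported_at L g _ (reinforce_supported L a g)) reinforce_softmax eqxx !mul1r.
Qed.

Lemma Ex_reinforce_sqr L a g :
  Ex L (fun g' b => reinforce L a g g' b ^+ 2) =
  goal_p R g * pol L g g * ((g == a)%:R - pol L a g) ^+ 2.
Proof.
rewrite (Ex_supported_at L g (fun g' b => reinforce L a g g' b ^+ 2)).
  by rewrite reinforce_softmax eqxx !mul1r.
by move=> g' b ne; rewrite reinforce_supported ?expr0n.
Qed.

Lemma MSE_reinforce L a g :
  MSE L a g (reinforce L a g) = Ex L (reinforce L a g) ^+ 2 * (k%:R / pol L g g - 1).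
Proof.
have k_gt0 : (0 < k)%N := leq_ltn_trans (leq0n a) (ltn_ord a).
rewrite /MSE Ex_sub_mean_sqr // Ex_reinforce_sqr Ex_reinforce /goal_p.
have := pol_gt0 L g g; have : k%:R != 0 :> R by rewrite pnatr_eq0 -lt0n.
move: (pol L g g) => p kn0 /lt0r_neq0 pn0.
by field; rewrite kn0 pn0.
Qed.

End SoftmaxGradient.

Section ConstantLogits.
Variables (R : realType) (k : nat) (L0 : R).
Hypothesis k_gt1 : (1 < k)%N.

Lemma pol_const (b g : 'I_k) : pol (const_logits L0) b g = k%:R^-1.
Proof.
rewrite /pol /const_logits sumr_const card_ord -[expR L0 *+ k]mulr_natr invfM mulrA.
by rewrite mulfV ?mul1r // gt_eqF ?expR_gt0.
Qed.

Lemma Ex_reinforce_const_neq0 (a g : 'I_k) :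
  Ex (const_logits L0) (reinforce (const_logits L0) a g) != 0.
Proof.
have k_neq0 : k%:R != 0 :> R by rewrite pnatr_eq0 -lt0n ltnW.
rewrite Ex_reinforce !pol_const /goal_p !mulf_neq0 ?invr_eq0 //.
by case: (g == a); rewrite ?sub0r ?oppr_eq0 ?invr_eq0 // subr_eq0 eq_sym invr_eq1 pnatr_eq1 gtn_eqF.
Qed.

Lemma snr_ratio_const (a g : 'I_k) : snr_ratio L0 a g = Num.sqrt (k%:R ^+ 2 - 1).
Proof.
have k_neq0 : k%:R != 0 :> R by rewrite pnatr_eq0 -lt0n ltnW.
rewrite /snr_ratio MSE_reinforce pol_const invrK -expr2 sqrtrM ?sqr_ge0 // sqrtr_sqr.
by rewrite mulrAC mulfV ?mul1r // normr_eq0 Ex_reinforce_const_neq0.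
Qed.

End ConstantLogits.

Lemma sqrt_sqr_sub1_div_bounds (R : rcfType) (x : R) : 1 <= x ->
  1 - x^-1 <= Num.sqrt (x ^+ 2 - 1) / x <= 1.
Proof.
move=> x_ge1; have x_gt0 : 0 < x by lra.
have sqr_sub1_ge0 : 0 <= x ^+ 2 - 1 by nra.
have lower : x - 1 <= Num.sqrt (x ^+ 2 - 1).
  by rewrite -(@ler_pXn2r _ 2) ?nnegrE ?sqrtr_ge0 ?subr_ge0 // sqr_sqrtr //; lra.
have upper : Num.sqrt (x ^+ 2 - 1) <= x.
  by rewrite -(@ler_pXn2r _ 2) ?nnegrE ?sqrtr_ge0 ?ltW // sqr_sqrtr //; lra.
by rewrite ler_pdivlMr // ler_pdivrMr // mul1r mulrBl mul1r mulVf ?gt_eqF ?lower.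
Qed.

Theorem theorem1 (R : realType) (L0 : R) (a g : forall n : nat, 'I_n.+1) :
  (fun n : nat => snr_ratio L0 (a n) (g n) / (n.+1)%:R) @ \oo --> (1 : R).
Proof.
apply: (@squeeze_cvgr _ _ _ _ (fun n => 1 - (n.+1)%:R^-1) (cst 1)).
- near=> n; rewrite snr_ratio_const; last by near: n; exists 1%N.
  by apply: sqrt_sqr_sub1_div_bounds; rewrite ler1n.
- by rewrite -[X in _ --> X]subr0; apply: cvgB; [exact: cvg_cst | exact: cvg_harmonic].
- exact: cvg_cst.
Unshelve. all: by end_near.
Qed.
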